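(* Let $p\ge 3$ be a prime and let $w$ be a zero-sum-free $\mathbb{Z}_p$-arc-labelling of $\overleftrightarrow{K}_3$. Then there exist a vertex $v\in V(\overleftrightarrow{K}_3)$ and directed paths $P_1,P_2$ of positive length in $\overleftrightarrow{K}_3$, both ending at $v$, such that the three values $0$, $\sum_{(x,y)\in A(P_1)} w(x,y)$ and $\sum_{(x,y)\in A(P_2)} w(x,y)$ are pairwise distinct.
   Context: $\overleftrightarrow{K}_3$ denotes the complete digraph on $3$ vertices whose arc set consists of all ordered pairs of distinct vertices; $A(P)$ denotes the arc set of a path $P$. A $\mathbb{Z}_p$-arc-labelling is a function from the arc set to the cyclic group $\mathbb{Z}_p$; it is zero-sum-free if no directed cycle (including directed cycles of length two) has arc-labels summing to $0$ in $\mathbb{Z}_p$. *)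

(* Vertices of the complete digraph K3 are 'I_3;
   every ordered pair of distinct vertices is an arc. *)
From mathcomp Require Import all_boot all_algebra.
Set Implicit Arguments. Unset Strict Implicit. Unset Printing Implicit Defensive.
Import GRing.Theory.
Local Open Scope ring_scope.

(* A Z_p-arc-labelling: values on the diagonal (non-arcs) are never used. *)
Definition labelling (p : nat) := 'I_3 -> 'I_3 -> 'Z_p.

Definition walk_weight (p : nat) (w : labelling p) (x : 'I_3) (s : seq 'I_3) : 'Z_p :=
  \sum_(e <- zip (x :: s) s) w e.1 e.2.

Definition is_dpath (x : 'I_3) (s : seq 'I_3) : bool :=
  uniq (x :: s) && (s != [::]).

(* directed cycle x :: s -> x with at least 2 distinct vertices
   (includes directed 2-cycles); its weight includes the closing arc *)
Definition is_dcycle (x : 'I_3) (s : seq 'I_3) : bool :=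
  uniq (x :: s) && (s != [::]).

Definition cycle_weight (p : nat) (w : labelling p) (x : 'I_3) (s : seq 'I_3) : 'Z_p :=
  walk_weight w x (rcons s x).

Definition zero_sum_free (p : nat) (w : labelling p) : Prop :=
  forall (x : 'I_3) (s : seq 'I_3), is_dcycle x s -> cycle_weight w x s != 0.

From mathcomp Require Import all_boot all_algebra.
From Stdlib Require Import Classical.
Set Implicit Arguments. Unset Strict Implicit. Unset Printing Implicit Defensive.
Import GRing.Theory.
Local Open Scope ring_scope.

(* Suppose that at every vertex z all nonzero weights of the four paths ending
   at z coincide.  Comparing the paths y z and x y z shows that consecutive
   nonzero arcs carry opposite labels, and together with the digon condition
   this leaves at most one nonzero arc out of each vertex.  So a nonzero arc
   x y forces w(x,z) = 0, hence w(z,x) <> 0, hence w(z,y) = 0, hence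
   w(y,z) <> 0: the nonzero arcs close a directed triangle, around which the
   labels would alternate in sign, impossible without 2-torsion.  Hence every
   label vanishes, contradicting the digon condition. *)

Section ArcLabels.

Variables (V : zmodType) (w : 'I_3 -> 'I_3 -> V).

Definition in_weights (x y z : 'I_3) : seq V :=
  [:: w x z; w y z; w y x + w x z; w x y + w y z].

Definition in_weights_agree : Prop :=
  forall x y z, x != y -> y != z -> z != x ->
  {in in_weights x y z &, forall a b, a != 0 -> b != 0 -> a = b}.

Hypothesis double_eq0 : forall t : V, t + t = 0 -> t = 0.
Hypothesis digon_nz : forall x y, x != y -> w x y + w y x != 0.

Lemma rev_arc_nz x y : x != y -> w x y = 0 -> w y x != 0.
Proof. by move=> /digon_nz + xy0; rewrite xy0 add0r. Qed.

Lemma eq_opp_self_eq0 (t : V) : t = - t -> t = 0.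
Proof. by move=> tN; apply: double_eq0; rewrite {2}tN subrr. Qed.

Section Agreement.

Hypothesis agree : in_weights_agree.

Lemma consecutive_arcs_opp x y z : x != y -> y != z -> z != x ->
  w x y != 0 -> w y z != 0 -> w x y = - w y z.
Proof.
move=> xy yz zx xy_nz yz_nz; apply/eqP; rewrite -addr_eq0; apply: contraT => xyz_nz.
have : w x y + w y z = w y z by apply: (agree xy yz zx); rewrite ?inE ?eqxx ?orbT.
by rewrite -[RHS]add0r => /addIr xy0; rewrite xy0 eqxx in xy_nz.
Qed.

Lemma cross_arc_nz x y z : x != y -> y != z -> z != x ->
  w x y != 0 -> w x z != 0 -> w y z != 0.
Proof.
move=> xy yz zx xy_nz xz_nz; apply/eqP => yz0.
have [xz zy yx] : [/\ x != z, z != y & y != x] by split; rewrite eq_sym.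
have zy_nz := rev_arc_nz yz yz0.
have xy_xz : w x y = w x z.
  have : w x y + w y z = w x z.
    by apply: (agree xy yz zx); rewrite ?inE ?eqxx ?orbT ?yz0 ?addr0.
  by rewrite yz0 addr0.
have zy_xy : w z y = w x y by apply: (agree xz zy yx); rewrite ?inE ?eqxx ?orbT.
have : w x z + w z y = w x y.
  apply: (agree xz zy yx); rewrite ?inE ?eqxx ?orbT //.
  by rewrite -xy_xz zy_xy; apply/eqP => /double_eq0 xy0; rewrite xy0 eqxx in xy_nz.
by rewrite zy_xy -[RHS]add0r => /addIr xz0; rewrite xz0 eqxx in xz_nz.
Qed.

Lemma out_arc_eq0 x y z : x != y -> y != z -> z != x ->
  w x y != 0 -> w x z = 0.
Proof.
move=> xy yz zx xy_nz; apply/eqP; apply: contraT => xz_nz.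
have [xz zy yx] : [/\ x != z, z != y & y != x] by split; rewrite eq_sym.
have yz_nz := cross_arc_nz xy yz zx xy_nz xz_nz.
have zy_nz := cross_arc_nz xz zy yx xz_nz xy_nz.
have yz_xz : w y z = w x z by apply: (agree xy yz zx); rewrite ?inE ?eqxx ?orbT.
have zy_xy : w z y = w x y by apply: (agree xz zy yx); rewrite ?inE ?eqxx ?orbT.
have := digon_nz yz; rewrite yz_xz zy_xy (consecutive_arcs_opp xy yz zx) //.
by rewrite yz_xz addrN eqxx.
Qed.

Lemma directed_triangle_nz_false x y z : x != y -> y != z -> z != x ->
  w x y != 0 -> w y z != 0 -> w z x != 0 -> False.
Proof.
move=> xy yz zx xy_nz yz_nz zx_nz.
have xyN := consecutive_arcs_opp xy yz zx xy_nz yz_nz.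
have yzN := consecutive_arcs_opp yz zx xy yz_nz zx_nz.
have zxN := consecutive_arcs_opp zx xy yz zx_nz xy_nz.
have /eq_opp_self_eq0 xy0 : w x y = - w x y by rewrite {1}xyN yzN zxN opprK.
by rewrite xy0 eqxx in xy_nz.
Qed.

Lemma arc_eq0 x y z : x != y -> y != z -> z != x -> w x y = 0.
Proof.
move=> xy yz zx; apply/eqP; apply: contraT => xy_nz; exfalso.
have [xz zy] : x != z /\ z != y by split; rewrite eq_sym.
have zx_nz := rev_arc_nz xz (out_arc_eq0 xy yz zx xy_nz).
have yz_nz := rev_arc_nz zy (out_arc_eq0 zx xy yz zx_nz).
exact: (directed_triangle_nz_false xy yz zx).
Qed.

End Agreement.

Lemma not_in_weights_agree : ~ in_weights_agree.
Proof.
move=> agree; have := digon_nz (isT : (0 : 'I_3) != 1).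
by rewrite !(arc_eq0 agree (z := 2)) // addr0 eqxx.
Qed.

End ArcLabels.

Lemma walk_weight_nil p (w : labelling p) x : walk_weight w x [::] = 0.
Proof. exact: big_nil. Qed.

Lemma walk_weight_cons p (w : labelling p) x y s :
  walk_weight w x (y :: s) = w x y + walk_weight w y s.
Proof. exact: big_cons. Qed.

Lemma zero_sum_free_digon p (w : labelling p) :
  zero_sum_free w -> forall x y, x != y -> w x y + w y x != 0.
Proof.
move=> zsf x y xy; have := zsf x [:: y].
rewrite /cycle_weight /is_dcycle /= !walk_weight_cons walk_weight_nil addr0.
by rewrite inE xy; apply.
Qed.

Lemma Zp_double_eq0 p :
  prime p -> (2 < p)%N -> forall t : 'Z_p, t + t = 0 -> t = 0.
Proof.
move=> p_pr p_gt2 t tt0; have two_unit : (2%:R : 'Z_p) \is a GRing.unit.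
  by rewrite unitZpE ?prime_gt1 // prime_coprime // gtnNdvd.
by apply: (mulrI two_unit); rewrite mulr0 mulr_natl mulr2n.
Qed.

Definition paths_into (x y z : 'I_3) : seq ('I_3 * seq 'I_3) :=
  [:: (x, [:: z]); (y, [:: z]); (y, [:: x; z]); (x, [:: y; z])].

Lemma in_weightsE p (w : labelling p) x y z :
  in_weights w x y z = [seq walk_weight w P.1 P.2 | P <- paths_into x y z].
Proof. by rewrite /= !walk_weight_cons !walk_weight_nil !addr0. Qed.

Lemma paths_into_dpath x y z P : x != y -> y != z -> z != x ->
  P \in paths_into x y z -> is_dpath P.1 P.2 /\ last P.1 P.2 = z.
Proof.
move=> xy yz zx; have [xz yx] : x != z /\ y != x by split; rewrite eq_sym.
by rewrite !inE => /or4P[] /eqP->; rewrite /is_dpath /= !inE ?negb_or ?xy ?yz ?xz ?yx.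
Qed.

Theorem lemma6 (p : nat) (hp : prime p) (hp3 : (3 <= p)%N) (w : labelling p) :
  zero_sum_free w ->
  exists (v : 'I_3) (x1 : 'I_3) (s1 : seq 'I_3) (x2 : 'I_3) (s2 : seq 'I_3),
    [/\ is_dpath x1 s1, last x1 s1 = v, is_dpath x2 s2, last x2 s2 = v &
        [/\ walk_weight w x1 s1 != 0, walk_weight w x2 s2 != 0 &
            walk_weight w x1 s1 != walk_weight w x2 s2]].
Proof.
move=> zsf; apply: NNPP => no_paths.
apply: (not_in_weights_agree (Zp_double_eq0 hp hp3) (zero_sum_free_digon zsf)).
move=> x y z xy yz zx a b; rewrite in_weightsE.
move=> /mapP[P1 P1z ->] /mapP[P2 P2z ->] nz1 nz2.
apply: NNPP => ne12; apply: no_paths.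
have [P1path P1end] := paths_into_dpath xy yz zx P1z.
have [P2path P2end] := paths_into_dpath xy yz zx P2z.
by exists z, P1.1, P1.2, P2.1, P2.2; split => //; split => //; apply/eqP.
Qed.
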